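(* Let $k$ be a field and let $M$ be a finitely generated, commutative, cancellative monoid whose group completion $M^{\mathrm{gp}}$ is torsion-free, and let $X=\operatorname{Spec} k[M]$. Let $M^\times\subseteq M$ be the group of units of $M$ and $Y=\operatorname{Spec} k[M^\times]$. Let $\pi\colon X\to Y$ be the morphism induced by the inclusion $M^\times\hookrightarrow M$, and let $i\colon Y\to X$ be the morphism induced by the monoid map $M\to M^\times\cup\{0\}$ that is the identity on $M^\times$ and sends $M\setminus M^\times$ to $0$. Then $i$ and $\pi$ are mutually inverse naive $\mathbf A^1$-homotopy equivalences: $\pi\circ i=\mathrm{id}_Y$, and $i\circ\pi$ is naively $\mathbf A^1$-homotopic to $\mathrm{id}_X$.
   Context: Two morphisms $f,g\colon X\to X'$ of $k$-schemes are naively $\mathbf A^1$-homotopic if they are related by the equivalence relation generated by: $f\sim g$ whenever there is a morphism $h\colon \mathbf A^1_k\times_k X\to X'$ with $h|_{\{0\}\times X}=f$ and $h|_{\{1\}\times X}=g$. Such an $X$ is called a split affine toric variety; $i$ embeds $Y$ as the unique closed torus orbit of $X$. *)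

From HB Require Import structures.
From mathcomp Require Import all_boot all_order all_algebra.
From mathcomp Require Import finmap.
From mathcomp Require Import boolp.
From Stdlib Require Import Relations.
Set Implicit Arguments. Unset Strict Implicit. Unset Printing Implicit Defensive.
Import GRing.Theory.
Local Open Scope ring_scope.


(* Monoid algebras k[T] of a monoid (T, op, e): finitely supported functions *)
Section MonoidAlgebra.
Variables (k : fieldType) (T : choiceType).

Local Notation MA := {fsfun T -> k with 0%R}.

Definition ma_add (f g : MA) : MA :=
  [fsfun x in (finsupp f `|` finsupp g)%fset => f x + g x].

Definition ma_scale (c : k) (f : MA) : MA :=
  [fsfun x in finsupp f => c * f x].

Definition ma_basis (t : T) : MA := [fsfun x in [fset t]%fset => 1].

Definition ma_mul (op : T -> T -> T) (f g : MA) : MA :=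
  [fsfun x in [fset op a b | a in finsupp f, b in finsupp g]%fset =>
     \sum_(a <- finsupp f) \sum_(b <- finsupp g | op a b == x) f a * g b].

End MonoidAlgebra.

Notation MA k T := {fsfun T -> k with 0%R}.

Definition is_kalg_hom (k : fieldType) (T U : choiceType)
    (opT : T -> T -> T) (eT : T) (opU : U -> U -> U) (eU : U)
    (phi : MA k T -> MA k U) : Prop :=
  [/\ forall f g, phi (ma_add f g) = ma_add (phi f) (phi g),
      forall c f, phi (ma_scale c f) = ma_scale c (phi f),
      forall f g, phi (ma_mul opT f g) = ma_mul opU (phi f) (phi g)
    & phi (ma_basis k eT) = ma_basis k eU].

Definition ma_map (k : fieldType) (T U : choiceType) (phi : T -> U)
    (f : MA k T) : MA k U :=
  [fsfun u in [fset phi t | t in finsupp f]%fset =>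
     \sum_(t <- finsupp f | phi t == u) f t].

(* k[M][t] = k[N x M] (k[t] = k[N]) and evaluation at t = c.                *)
Definition A1op (T : choiceType) (op : T -> T -> T) (p q : nat * T) : nat * T :=
  ((p.1 + q.1)%N, op p.2 q.2).

Definition ma_ev (k : fieldType) (T : choiceType) (c : k)
    (f : MA k (nat * T)) : MA k T :=
  [fsfun m in [fset p.2 | p in finsupp f]%fset =>
     \sum_(p <- finsupp f | p.2 == m) f p * c ^+ p.1].

(* Elementary naive A^1-homotopy between two endomorphisms phi, psi of the   *)
(* affine k-scheme Spec k[T], in terms of the corresponding k-algebra maps:  *)
(* a k-algebra map h : k[T] -> k[T][t] with h(t=0) = phi and h(t=1) = psi.   *)
Definition elem_A1_htpy (k : fieldType) (T : choiceType) (op : T -> T -> T)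
    (e : T) (phi psi : MA k T -> MA k T) : Prop :=
  exists h : MA k T -> MA k (nat * T),
    [/\ is_kalg_hom op e (A1op op) (0%N, e) h,
        forall f, ma_ev 0 (h f) = phi f
      & forall f, ma_ev 1 (h f) = psi f].

Definition naive_A1_htpy (k : fieldType) (T : choiceType) (op : T -> T -> T)
    (e : T) : relation (MA k T -> MA k T) :=
  clos_refl_sym_trans _ (@elem_A1_htpy k T op e).

Definition cancellative (M : Type) (op : M -> M -> M) : Prop :=
  forall a b c, op a c = op b c -> a = b.

Definition fin_generated (M : eqType) (e : M) (op : M -> M -> M) : Prop :=
  exists s : seq M, forall m : M, exists n : seq M,
    (forall x, x \in n -> x \in s) /\ m = \big[op/e]_(x <- n) x.

(* The group completion M^gp of a cancellative commutative monoid: pairs     *)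
(* (a, b) (standing for a - b) modulo (a,b) ~ (c,d) iff a + d = b + c.       *)
Definition gp_rel (M : Type) (op : M -> M -> M) (p q : M * M) : Prop :=
  op p.1 q.2 = op p.2 q.1.

Definition mpow (M : Type) (e : M) (op : M -> M -> M) (a : M) (n : nat) : M :=
  \big[op/e]_(i < n) a.

Definition gp_torsion_free (M : Type) (e : M) (op : M -> M -> M) : Prop :=
  forall (a b : M) (n : nat), (0 < n)%N ->
    gp_rel op (mpow e op a n, mpow e op b n) (e, e) -> gp_rel op (a, b) (e, e).

Section Units.
Variables (M : choiceType) (e : M) (op : Monoid.com_law e).

Definition is_unitm (x : M) : bool := `[< exists y, op x y = e >].

Definition Mx := {x : M | is_unitm x}.

Lemma unitm_op (x y : Mx) : is_unitm (op (val x) (val y)).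
Proof.
move: x y => [x Hx0] [y Hy0] /=.
move/asboolP: Hx0 => [x' Hx]; move/asboolP: Hy0 => [y' Hy].
apply/asboolP; exists (op x' y').
have -> : op (op x y) (op x' y') = op (op x x') (op y y') by rewrite Monoid.mulmACA.
by rewrite Hx Hy Monoid.mul1m.
Qed.

Lemma unitm_e : is_unitm e.
Proof. by apply/asboolP; exists e; rewrite Monoid.mul1m. Qed.

Definition Mx_op (x y : Mx) : Mx := exist _ (op (val x) (val y)) (unitm_op x y).
Definition Mx_e : Mx := exist _ e unitm_e.

(* pi : X -> Y corresponds to pi^* : k[M^x] -> k[M] induced by inclusion *)
Definition pi_star (k : fieldType) (f : MA k Mx) : MA k M := ma_map val f.

(* i : Y -> X corresponds to i^* : k[M] -> k[M^x] induced by the monoid map *)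
(* M -> M^x u {0} (identity on units, non-units to 0): e_m |-> e_m if m is a *)
(* unit, e_m |-> 0 otherwise.                                               *)
Definition i_star (k : fieldType) (f : MA k M) : MA k Mx :=
  [fsfun u in [fset u | u in pmap insub (finsupp f : seq M)]%fset => f (val u)].

End Units.

From HB Require Import structures.
From mathcomp Require Import all_boot all_order all_algebra.
From mathcomp Require Import finmap boolp ring lra.
From Stdlib Require Import Relations.
Set Implicit Arguments. Unset Strict Implicit. Unset Printing Implicit Defensive.
Import Order.TTheory GRing.Theory Num.Theory.
Local Open Scope ring_scope.

(* A map d : M -> nat with d (a * b) = d a + d b that vanishes exactly on the
   units gives the homotopy e_m |-> t^(d m) e_m from k[M] to k[M][t]: it is the
   identity at t = 1 and pi^* o i^* at t = 0.  To build d, present M by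
   monomials g^a (a in N^r) in finitely many generators g_j.  By cancellativity
   a relation g^a = g^b with a >= b on the non-unit generators has a = b there,
   so the rational span of the relation vectors a - b (restricted to the
   non-unit coordinates) meets the nonnegative orthant only in 0.  Gordan's
   alternative, proved by Fourier-Motzkin elimination, then yields rational
   weights that are positive on the non-unit generators and orthogonal to all
   relations; clearing denominators gives d. *)

Section MonoidAlgebraFormulas.
Variable k : fieldType.

Lemma ma_addE (T : choiceType) (f g : MA k T) x : ma_add f g x = f x + g x.
Proof.
rewrite fsfunE in_fsetU; case: ifP => // /norP[/fsfun_dflt-> /fsfun_dflt->].
by rewrite addr0.
Qed.

Lemma ma_scaleE (T : choiceType) c (f : MA k T) x : ma_scale c f x = c * f x.
Proof. by rewrite fsfunE; case: ifP => // /negbT/fsfun_dflt->; rewrite mulr0. Qed.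

Lemma ma_basisE (T : choiceType) (t x : T) : ma_basis k t x = (x == t)%:R.
Proof. by rewrite fsfunE in_fset1; case: eqP. Qed.

Lemma ma_mapE (T U : choiceType) (phi : T -> U) (f : MA k T) u :
  ma_map phi f u = \sum_(t <- finsupp f | phi t == u) f t.
Proof.
rewrite fsfunE; case: ifP => // /negbT u_out.
rewrite big_seq_cond big1 // => t /andP[t_supp /eqP phi_t].
by move: u_out; rewrite -phi_t in_imfset.
Qed.

Lemma ma_mulE (T : choiceType) op (f g : MA k T) x :
  ma_mul op f g x =
  \sum_(a <- finsupp f) \sum_(b <- finsupp g | op a b == x) f a * g b.
Proof.
rewrite fsfunE; case: ifP => // /negbT x_out.
rewrite big_seq big1 // => a a_supp; rewrite big_seq_cond big1 // => b.
by case/andP=> b_supp /eqP ab_x; move: x_out; rewrite -ab_x in_imfset2.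
Qed.

Lemma ma_evE (T : choiceType) (c : k) (f : MA k (nat * T)) m :
  ma_ev c f m = \sum_(p <- finsupp f | p.2 == m) f p * c ^+ p.1.
Proof.
rewrite fsfunE; case: ifP => // /negbT m_out.
rewrite big_seq_cond big1 // => p /andP[p_supp /eqP p_m].
by move: m_out; rewrite -p_m in_imfset.
Qed.

Lemma big_finsupp_pred1 (T : choiceType) (f : MA k T) (G : T -> k) m :
  \sum_(t <- finsupp f | t == m) G t * f t = G m * f m.
Proof.
rewrite -big_filter; have [m_supp|m_out] := boolP (m \in finsupp f).
  by rewrite filter_pred1_uniq ?fset_uniq // big_seq1.
rewrite fsfun_dflt // mulr0 big1_seq // => t /andP[_].
by rewrite mem_filter => /andP[/eqP-> t_supp]; rewrite t_supp in m_out.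
Qed.

Section InjectiveMap.
Variables (T U : choiceType) (phi : T -> U).
Hypothesis phi_inj : injective phi.

Lemma ma_map_inj (f : MA k T) t : ma_map phi f (phi t) = f t.
Proof.
rewrite ma_mapE -[RHS]mul1r -(big_finsupp_pred1 f (fun=> 1)).
by apply: eq_big => [s|s _]; rewrite ?inj_eq // mul1r.
Qed.

Lemma ma_map_out (f : MA k T) u : (forall t, phi t != u) -> ma_map phi f u = 0.
Proof. by move=> u_out; rewrite ma_mapE big_pred0 // => t; apply/negbTE. Qed.

Lemma finsupp_ma_map (f : MA k T) :
  finsupp (ma_map phi f) = [fset phi t | t in finsupp f]%fset.
Proof.
apply/fsetP => u; rewrite mem_finsupp.
have [[t <-]|u_out] := pselect (exists t, phi t = u).
  by rewrite ma_map_inj mem_imfset ?mem_finsupp //; move=> ? ? _ _ /phi_inj.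
rewrite ma_map_out ?eqxx; last by move=> t; apply/eqP => phi_t; apply: u_out; exists t.
by apply/esym/imfsetP => -[t _ u_phi]; apply: u_out; exists t.
Qed.

Lemma big_finsupp_ma_map (f : MA k T) (F : U -> k) :
  \sum_(u <- finsupp (ma_map phi f)) F u = \sum_(t <- finsupp f) F (phi t).
Proof. by rewrite finsupp_ma_map big_imfset //= => ? ? _ _ /phi_inj. Qed.

Variables (opT : T -> T -> T) (eT : T) (opU : U -> U -> U) (eU : U).
Hypothesis phiM : forall a b, phi (opT a b) = opU (phi a) (phi b).
Hypothesis phi1 : phi eT = eU.

Lemma ma_map_kalg_hom : is_kalg_hom opT eT opU eU (@ma_map k T U phi).
Proof.
have eq_on_image (F G : MA k U) : (forall t, F (phi t) = G (phi t)) ->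
    (forall u, (forall t, phi t != u) -> F u = G u) -> F = G.
  move=> eq_im eq_out; apply/fsfunP => u.
  have [[t <-]|u_out] := pselect (exists t, phi t = u); first exact: eq_im.
  by apply: eq_out => t; apply/eqP => phi_t; apply: u_out; exists t.
split.
- move=> f g; apply: eq_on_image => [t|u u_out].
    by rewrite ma_addE !ma_map_inj ma_addE.
  by rewrite ma_addE !ma_map_out ?addr0.
- move=> c f; apply: eq_on_image => [t|u u_out].
    by rewrite ma_scaleE !ma_map_inj ma_scaleE.
  by rewrite ma_scaleE !ma_map_out ?mulr0.
- move=> f g; have mulE u : ma_mul opU (ma_map phi f) (ma_map phi g) u =
      \sum_(a <- finsupp f) \sum_(b <- finsupp g | phi (opT a b) == u) f a * g b.
    rewrite ma_mulE big_finsupp_ma_map; apply: eq_bigr => a _.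
    rewrite big_mkcond big_finsupp_ma_map -big_mkcond /=.
    by apply: eq_big => [b|b _]; rewrite ?phiM // !ma_map_inj.
  apply: eq_on_image => [t|u u_out]; rewrite mulE.
    rewrite ma_map_inj ma_mulE; apply: eq_bigr => a _.
    by apply: eq_bigl => b; rewrite inj_eq.
  rewrite ma_map_out // big1 // => a _; rewrite big_pred0 // => b.
  exact/negbTE/u_out.
- apply: eq_on_image => [t|u u_out]; rewrite ma_basisE -phi1.
    by rewrite ma_map_inj ma_basisE inj_eq.
  by rewrite ma_map_out // eq_sym (negbTE (u_out eT)).
Qed.

End InjectiveMap.

Lemma ma_ev_graded (T : choiceType) (d : T -> nat) (c : k) (f : MA k T) m :
  ma_ev c (ma_map (fun t => (d t, t)) f) m = c ^+ d m * f m.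
Proof.
have graph_inj : injective (fun t => (d t, t)) by move=> s t [].
rewrite ma_evE big_mkcond big_finsupp_ma_map //= -big_mkcond /=.
rewrite -(big_finsupp_pred1 f (fun t => c ^+ d t)); apply: eq_bigr => t _.
by rewrite ma_map_inj // mulrC.
Qed.

End MonoidAlgebraFormulas.

Section Units.
Variables (k : fieldType) (M : choiceType) (e : M) (op : Monoid.com_law e).

Lemma unitmM x y : is_unitm op (op x y) = is_unitm op x && is_unitm op y.
Proof.
apply/idP/andP => [|[x_unit y_unit]]; last first.
  exact: (unitm_op (exist _ x x_unit) (exist _ y y_unit)).
rewrite /is_unitm => /asboolP[z xyz_e].
split; apply/asboolP; first by exists (op y z); rewrite Monoid.mulmA; exact: xyz_e.
by exists (op x z); rewrite Monoid.mulmCA Monoid.mulmA; exact: xyz_e.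
Qed.

Lemma i_starE (f : MA k M) u : i_star op f u = f (val u).
Proof.
rewrite fsfunE; case: ifP => // /negbT u_out; apply/esym/fsfun_dflt.
apply: contra u_out => u_supp; rewrite in_fset /= mem_pmap.
by apply/mapP; exists (val u); rewrite ?valK.
Qed.

Lemma pi_star_val (f : MA k (Mx op)) u : pi_star f (val u) = f u.
Proof. exact/ma_map_inj/val_inj. Qed.

Lemma pi_star_i_starE (f : MA k M) m :
  pi_star (i_star op f) m = if is_unitm op m then f m else 0.
Proof.
case: ifPn => [m_unit|m_nonunit].
  by rewrite -[m]/(val (exist _ m m_unit : Mx op)) pi_star_val i_starE.
by apply: ma_map_out => u; apply: contraNneq m_nonunit => <-; apply: valP.
Qed.

Lemma i_star_pi_star (f : MA k (Mx op)) : i_star op (pi_star f) = f.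
Proof. by apply/fsfunP => u; rewrite i_starE pi_star_val. Qed.

End Units.

Section GradedHomotopy.
Variables (k : fieldType) (M : choiceType) (e : M) (op : Monoid.com_law e).
Variable d : M -> nat.
Hypothesis dM : forall a b, d (op a b) = (d a + d b)%N.
Hypothesis d_eq0 : forall m, (d m == 0)%N = is_unitm op m.

Lemma elem_A1_htpy_of_grading :
  elem_A1_htpy op e (fun f : MA k M => pi_star (i_star op f)) id.
Proof.
exists (ma_map (fun m => (d m, m))); split.
- apply: ma_map_kalg_hom => [s t [] //|a b|]; first by rewrite dM.
  by have /eqP-> : d e == 0%N by rewrite d_eq0 unitm_e.
- move=> f; apply/fsfunP => m; rewrite ma_ev_graded pi_star_i_starE -d_eq0.
  by case: (d m) => [|n]; rewrite ?expr0 ?mul1r ?expr0n ?mul0r.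
- by move=> f; apply/fsfunP => m; rewrite ma_ev_graded expr1n mul1r.
Qed.

End GradedHomotopy.

Section Gordan.
Variable F : realFieldType.

Lemma exists_between (I : finType) (P Q : pred I) (a b : I -> F) :
    (forall p q, P p -> Q q -> a p < b q) ->
  exists t, (forall p, P p -> a p < t) /\ (forall q, Q q -> t < b q).
Proof.
move=> lt_ab.
(* Seeding the max below every b q keeps it below them even when P is empty. *)
pose lo := \big[Order.max/(\big[Order.min/0]_(q | Q q) b q - 1)]_(p | P p) a p.
have lt_lo_b q : Q q -> lo < b q.
  move=> Qq; apply/bigmax_ltP; split; last by move=> p Pp; apply: lt_ab.
  by have := bigmin_le_cond 0 b Qq; lra.
pose hi := \big[Order.min/(lo + 1)]_(q | Q q) b q.
have lt_lo_hi : lo < hi by apply/bigmin_gtP; split; [lra | exact: lt_lo_b].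
exists ((lo + hi) / 2); split => [p Pp|q Qq].
  by have : a p <= lo := le_bigmax_cond _ _ Pp; lra.
by have : hi <= b q := bigmin_le_cond _ _ Qq; lra.
Qed.

Definition strict_solution (I : finType) (S : pred I) n (u : I -> 'I_n -> F) :=
  exists x : 'I_n -> F, forall i, S i -> 0 < \sum_c u i c * x c.

Definition nonneg_dependency (I : finType) (S : pred I) n (u : I -> 'I_n -> F) :=
  exists l : I -> F, [/\ forall i, 0 <= l i, forall i, ~~ S i -> l i = 0,
    exists i, 0 < l i & forall c, \sum_i l i * u i c = 0].

Section FourierMotzkin.
Variables (I : finType) (S : pred I) (n : nat) (u : I -> 'I_n.+1 -> F).

Local Notation cc i := (u i ord0).

Definition fm_pred (j : I + I * I) : bool :=
  match j with
  | inl i => S i && (cc i == 0)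
  | inr (p, q) => [&& S p, S q, 0 < cc p & cc q < 0]
  end.

Definition fm_vec (j : I + I * I) (c : 'I_n) : F :=
  match j with
  | inl i => u i (lift ord0 c)
  | inr (p, q) => cc p * u q (lift ord0 c) - cc q * u p (lift ord0 c)
  end.

Lemma fm_strict_solution :
  strict_solution fm_pred fm_vec -> strict_solution S u.
Proof.
case=> x' x'_pos; pose s i := \sum_c u i (lift ord0 c) * x' c.
have s_pos i : S i -> cc i = 0 -> 0 < s i.
  by move=> Si cc0; apply: (x'_pos (inl i)); rewrite /= Si cc0 eqxx.
have [t [lo_t t_hi]] : exists t,
    (forall p, S p && (0 < cc p) -> - s p / cc p < t) /\
    (forall q, S q && (cc q < 0) -> t < s q / - cc q).
  apply: exists_between => p q /andP[Sp cp] /andP[Sq cq].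
  have := x'_pos (inr (p, q)); rewrite /= Sp Sq cp cq => /(_ isT).
  have -> : \sum_c fm_vec (inr (p, q)) c * x' c = cc p * s q - cc q * s p.
    rewrite /s !mulr_sumr -sumrB; apply: eq_bigr => c _ /=; ring.
  rewrite ltr_pdivrMr // mulrAC ltr_pdivlMr ?oppr_gt0 //; nra.
exists (fun c => if unlift ord0 c is Some c' then x' c' else t) => i Si.
rewrite big_ord_recl unlift_none; under eq_bigr do rewrite liftK.
rewrite -/(s i); case: (ltrgt0P (cc i)) => [cp|cn|c0].
- by have := lo_t i; rewrite Si cp ltr_pdivrMr // => /(_ isT); nra.
- by have := t_hi i; rewrite Si cn ltr_pdivlMr ?oppr_gt0 // => /(_ isT); nra.
- by rewrite c0 mul0r add0r; apply: s_pos.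
Qed.

Lemma fm_nonneg_dependency :
  nonneg_dependency fm_pred fm_vec -> nonneg_dependency S u.
Proof.
case=> l' [l'_ge0 l'_supp [j0 l'j0_gt0] l'_dep].
have pair_supp p q :
    l' (inr (p, q)) != 0 -> [&& S p, S q, 0 < cc p & cc q < 0].
  by apply: contraR => npq; rewrite l'_supp ?eqxx.
pose lp p q := l' (inr (p, q)) * - cc q.
pose lq p q := l' (inr (p, q)) * cc p.
have lp_ge0 p q : 0 <= lp p q.
  rewrite /lp; have [->|/pair_supp/and4P[_ _ _ cq]] := eqVneq (l' (inr (p, q))) 0.
    by rewrite mul0r.
  by rewrite mulr_ge0 ?l'_ge0 // oppr_ge0 ltW.
have lq_ge0 p q : 0 <= lq p q.
  rewrite /lq; have [->|/pair_supp/and4P[_ _ cp _]] := eqVneq (l' (inr (p, q))) 0.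
    by rewrite mul0r.
  by rewrite mulr_ge0 ?l'_ge0 // ltW.
pose l i := l' (inl i) + \sum_q lp i q + \sum_p lq p i.
have l_sum (v : I -> F) : \sum_i l i * v i = \sum_i l' (inl i) * v i +
    \sum_p \sum_q l' (inr (p, q)) * (cc p * v q - cc q * v p).
  rewrite /l; under eq_bigr do rewrite !mulrDl !mulr_suml.
  rewrite !big_split /= -addrA; congr (_ + _).
  rewrite [X in _ + X]exchange_big -big_split /=; apply: eq_bigr => p _.
  by rewrite -big_split; apply: eq_bigr => q _ /=; rewrite /lp /lq; ring.
exists l; split.
- by move=> i; rewrite /l !addr_ge0 ?l'_ge0 // sumr_ge0.
- move=> i /negbTE Si; rewrite /l l'_supp /= ?Si // !big1 ?addr0 // => [p|q] _.
    by rewrite /lq l'_supp ?mul0r //= Si andbF.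
  by rewrite /lp l'_supp ?mul0r //= Si.
- case: j0 l'j0_gt0 => [i|[p q]] l'_gt0.
    exists i; rewrite /l -addrA; apply: lt_le_trans l'_gt0 _.
    by rewrite lerDl addr_ge0 // sumr_ge0.
  have /and4P[_ _ _ cq] := pair_supp p q (lt0r_neq0 l'_gt0).
  exists p; rewrite /l (bigD1 q) //=.
  have : 0 < lp p q by rewrite mulr_gt0 // oppr_gt0.
  have : 0 <= \sum_(q' | q' != q) lp p q' by apply: sumr_ge0 => q' _.
  have : 0 <= \sum_p' lq p' p by apply: sumr_ge0 => p' _.
  have := l'_ge0 (inl p); lra.
- move=> c; case: (unliftP ord0 c) => [c'|] ->.
    rewrite l_sum -[RHS](l'_dep c') big_sumType /= pair_big; congr (_ + _).
    by apply: eq_bigr => -[p q].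
  rewrite l_sum [X in _ + X]big1 ?addr0 => [|p _].
    apply: big1 => i _; have [->|nz] := eqVneq (l' (inl i)) 0.
      by rewrite mul0r.
    have /andP[_ /eqP->] : fm_pred (inl i).
      by apply: contraR nz => npi; rewrite l'_supp ?eqxx.
    by rewrite mulr0.
  by apply: big1 => q _; rewrite [cc q * _]mulrC subrr mulr0.
Qed.

End FourierMotzkin.

Lemma gordan (I : finType) (S : pred I) n (u : I -> 'I_n -> F) :
  strict_solution S u \/ nonneg_dependency S u.
Proof.
elim: n I S u => [|n IH] I S u.
  have [i0 Si0|S0] := pickP S; last by left; exists (fun=> 0) => i; rewrite S0.
  right; exists (fun i => (i == i0)%:R); split => [i|i|//|c].
  - by rewrite ler0n.
  - by case: eqP => // ->; rewrite Si0.
  - by exists i0; rewrite eqxx ltr01.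
  - by case: c.
case: (IH _ (fm_pred S u) (fm_vec u)).
  by move=> /fm_strict_solution; left.
by move=> /fm_nonneg_dependency; right.
Qed.

End Gordan.

Lemma common_denominator (I : finType) (q : I -> rat) :
  exists2 N : nat, (0 < N)%N &
    exists z : I -> int, forall i, N%:R * q i = (z i)%:~R.
Proof.
pose den i := `|denq (q i)|%N.
have den_q i : (den i)%:R * q i = (numq (q i))%:~R.
  by rewrite numqE mulrC natr_absz gtr0_norm ?denq_gt0.
exists (\prod_i den i)%N.
  by rewrite prodn_gt0 // => i; rewrite absz_gt0 denq_neq0.
exists (fun i => (\prod_(j | j != i) den j)%:Z * numq (q i)) => i.
by rewrite [X in X%:R](bigD1 i) //= mulnC natrM -mulrA den_q intrM -pmulrn.
Qed.

Section Monomials.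
Variables (M : choiceType) (e : M) (op : Monoid.com_law e).

Lemma mpowD x m n : mpow e op x (m + n) = op (mpow e op x m) (mpow e op x n).
Proof. by rewrite /mpow big_split_ord. Qed.

Lemma unitm_mpow x n :
  is_unitm op (mpow e op x n) = (n == 0%N) || is_unitm op x.
Proof.
rewrite /mpow (big_morph _ (@unitmM _ _ op) (unitm_e op)).
case: n => [|n]; first by rewrite big_ord0.
by rewrite big_ord_recl /=; apply/andb_idr => x_unit; apply: big1.
Qed.

Variables (r : nat) (g : 'I_r -> M).

Definition monomial (a : 'I_r -> nat) : M := \big[op/e]_j mpow e op (g j) (a j).

Lemma eq_monomial a b : a =1 b -> monomial a = monomial b.
Proof. by move=> ab; apply: eq_bigr => j _; rewrite ab. Qed.

Lemma monomialD a b :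
  monomial (fun j => a j + b j)%N = op (monomial a) (monomial b).
Proof. by rewrite /monomial -big_split; apply: eq_bigr => j _; rewrite mpowD. Qed.

Lemma monomial_delta i : monomial (fun j => (j == i : nat)) = g i.
Proof.
rewrite /monomial (bigD1 i) //= eqxx /mpow big_ord1 big1 ?Monoid.mulm1 //.
by move=> j /negbTE->; rewrite big_ord0.
Qed.

Definition nonunit_gen j := ~~ is_unitm op (g j).

Lemma unitm_monomial a :
  is_unitm op (monomial a) = [forall j, nonunit_gen j ==> (a j == 0%N)].
Proof.
rewrite /monomial (big_morph _ (@unitmM _ _ op) (unitm_e op)) big_andE.
by apply: eq_forallb => j; rewrite unitm_mpow /nonunit_gen /= implybE negbK orbC.
Qed.

Hypothesis op_cancel : cancellative op.

Lemma monomial_nonneg_relation a b : monomial a = monomial b ->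
    (forall j, nonunit_gen j -> b j <= a j)%N ->
  forall j, nonunit_gen j -> a j = b j.
Proof.
move=> ab le_ba.
pose a' j := if nonunit_gen j then (a j - b j)%N else a j.
pose bU j := if nonunit_gen j then 0%N else b j.
pose bN j := if nonunit_gen j then b j else 0%N.
have a_split : monomial a = op (monomial a') (monomial bN).
  rewrite -monomialD; apply: eq_monomial => j; rewrite /a' /bN.
  by case: ifP => [/le_ba/subnK|_]; rewrite ?addn0.
have b_split : monomial b = op (monomial bU) (monomial bN).
  rewrite -monomialD; apply: eq_monomial => j; rewrite /bU /bN.
  by case: ifP; rewrite ?addn0.
have a'_bU : monomial a' = monomial bU.
  by apply: (op_cancel (c := monomial bN)); rewrite -a_split -b_split.
have : is_unitm op (monomial a').
  by rewrite a'_bU unitm_monomial; apply/forallP => j; rewrite /bU; case: ifP.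
rewrite unitm_monomial => /forallP a'0 j nj.
apply/eqP; rewrite eqn_leq le_ba // andbT.
by have := a'0 j; rewrite nj /a' nj subn_eq0.
Qed.

End Monomials.

Section Relations.
Variables (M : choiceType) (e : M) (op : Monoid.com_law e).
Variables (r : nat) (g : 'I_r -> M).

Local Notation monomial := (monomial op g).
Local Notation nonunit_gen := (nonunit_gen op g).

(* Only the non-unit coordinates are kept: the weights of the unit generators
   are forced to be 0 anyway. *)
Definition exps_diff (a b : 'I_r -> nat) : 'rV[rat]_r :=
  \row_j (if nonunit_gen j then (a j)%:R - (b j)%:R else 0).

Definition relations : pred 'rV[rat]_r :=
  fun v => `[< exists a b, monomial a = monomial b /\ v = exps_diff a b >].

Lemma exps_diff_relation a b :
  monomial a = monomial b -> exps_diff a b \in relations.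
Proof. by move=> ab; apply/asboolP; exists a, b. Qed.

Lemma relations_zmod_closed : zmod_closed relations.
Proof.
split.
  apply/asboolP; exists (fun=> 0%N), (fun=> 0%N); split => //.
  by apply/rowP => j; rewrite !mxE subrr if_same.
move=> _ _ /asboolP[a [b [ab ->]]] /asboolP[a' [b' [ab' ->]]].
apply/asboolP; exists (fun j => a j + b' j)%N, (fun j => b j + a' j)%N; split.
  by rewrite !monomialD ab ab' Monoid.mulmC.
apply/rowP => j; rewrite !mxE; case: ifP => _; rewrite ?subr0 // !natrD; ring.
Qed.

End Relations.

HB.instance Definition _ (M : choiceType) (e : M) (op : Monoid.com_law e)
    (r : nat) (g : 'I_r -> M) :=
  GRing.isZmodClosed.Build _ (relations op g) (relations_zmod_closed op g).

Section Weights.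
Variables (M : choiceType) (e : M) (op : Monoid.com_law e).
Variables (r : nat) (g : 'I_r -> M).
Hypothesis op_cancel : cancellative op.

Local Notation monomial := (monomial op g).
Local Notation nonunit_gen := (nonunit_gen op g).
Local Notation relations := (relations op g).

Lemma nonneg_relation_eq0 v :
  v \in relations -> (forall j, 0 <= v 0 j) -> v = 0.
Proof.
case/asboolP=> a [b [ab ->]] ge0; apply/rowP => j; rewrite !mxE.
case: ifP => // nj.
rewrite (monomial_nonneg_relation op_cancel ab) ?subrr // => i ni.
by have := ge0 i; rewrite mxE ni subr_ge0 ler_nat.
Qed.

Lemma relations_span m (A : 'M[rat]_(m, r)) v :
    (forall i, row i A \in relations) -> (v <= A)%MS ->
  exists2 N : nat, (0 < N)%N & N%:R *: v \in relations.
Proof.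
move=> A_rel /submxP[D ->]; have [N N_gt0 [z Nz]] := common_denominator (D 0).
exists N => //; rewrite mulmx_sum_row scaler_sumr rpred_sum // => i _.
by rewrite scalerA Nz rpredZint.
Qed.

Lemma relation_basis : exists m (A : 'M[rat]_(m, r)),
  (forall i, row i A \in relations) /\ forall v, v \in relations -> (v <= A)%MS.
Proof.
pose has_basis n := `[< exists m (A : 'M[rat]_(m, r)),
  (forall i, row i A \in relations) /\ \rank A = n >].
have has_basis0 : has_basis 0%N.
  by apply/asboolP; exists 0%N, 0; split; [case | exact: mxrank0].
have has_basis_le n : has_basis n -> (n <= r)%N.
  by case/asboolP=> m [A [_ <-]]; apply: rank_leq_col.
case: (ex_maxnP (ex_intro _ 0%N has_basis0) has_basis_le).
move=> n /asboolP[m [A [A_rel rkA]]] n_max.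
exists m, A; split => // v v_rel; apply: contraT => v_notin.
have /n_max : has_basis (\rank (col_mx A v)).
  apply/asboolP; exists (m + 1)%N, (col_mx A v); split => // i.
  by case: (split_ordP i) => i' ->; rewrite ?rowKu ?rowKd ?row_id.
suff lt_rk : (\rank A < \rank (col_mx A v))%N by rewrite -rkA leqNgt lt_rk.
apply: rank_ltmx.
have /andP[A_le _] : (A <= col_mx A v)%MS && (v <= col_mx A v)%MS.
  by rewrite -col_mx_sub.
by rewrite ltmxE A_le col_mx_sub submx_refl.
Qed.

Lemma rat_weights : exists w : 'I_r -> rat,
  [/\ forall j, nonunit_gen j -> 0 < w j, forall j, ~~ nonunit_gen j -> w j = 0
     & forall v, v \in relations -> \sum_j v 0 j * w j = 0].
Proof.
have [m [A [A_rel A_span]]] := relation_basis; pose P := cokermx A.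
case: (gordan nonunit_gen P) => [[x x_pos]|[l [l_ge0 l_supp [i0 l_i0] l_dep]]].
  exists (fun j => if nonunit_gen j then \sum_c P j c * x c else 0); split.
  - by move=> j nj; rewrite nj x_pos.
  - by move=> j /negbTE->.
  move=> v v_rel; have /eqP vP : v *m P == 0 by rewrite -submxE A_span.
  transitivity (\sum_c (v *m P) 0 c * x c).
    under [RHS]eq_bigr do rewrite mxE mulr_suml.
    rewrite [RHS]exchange_big; apply: eq_bigr => j _ /=.
    case/asboolP: v_rel => a [b [_ ->]]; rewrite !mxE.
    case: ifP => _; last by rewrite mul0r big1 // => c _; rewrite !mul0r.
    by rewrite mulr_sumr; apply: eq_bigr => c _; rewrite mulrA.
  by rewrite vP big1 // => c _; rewrite mxE mul0r.
(* A nonnegative dependency of the columns of cokermx A lies in the row space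
   of A, hence a multiple of it is a nonnegative relation, hence it is 0. *)
have lam_A : (\row_i l i <= A)%MS.
  rewrite submxE; apply/eqP/rowP => c; rewrite !mxE -[RHS](l_dep c).
  by apply: eq_bigr => i _; rewrite mxE.
have [N N_gt0 N_lam] := relations_span A_rel lam_A.
have N_lam0 : N%:R *: \row_i l i = 0.
  by apply: (nonneg_relation_eq0 N_lam) => j; rewrite !mxE mulr_ge0.
have /rowP/(_ i0)/eqP := N_lam0.
by rewrite !mxE mulf_eq0 pnatr_eq0 gtn_eqF // gt_eqF.
Qed.

Lemma nat_weights : exists W : 'I_r -> nat,
  (forall j, (0 < W j)%N = nonunit_gen j) /\
  forall a b, monomial a = monomial b -> (\sum_j W j * a j = \sum_j W j * b j)%N.
Proof.
have [w [w_pos w0 w_orth]] := rat_weights.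
have [N N_gt0 [z Nw]] := common_denominator w.
have w_ge0 j : 0 <= w j by case: (boolP (nonunit_gen j)) => [/w_pos/ltW|/w0->].
have W_w j : (`|z j|%N)%:R = N%:R * w j :> rat.
  by rewrite Nw natr_absz ger0_norm // -(ler0z rat) -Nw mulr_ge0.
exists (fun j => `|z j|%N); split => [j|a b ab].
  rewrite -(ltr0n rat) W_w pmulr_rgt0 ?ltr0n //.
  by case: (boolP (nonunit_gen j)) => [/w_pos->|/w0->]; rewrite ?ltxx.
apply/eqP; rewrite -(eqr_nat rat) !natr_sum -subr_eq0 -sumrB.
apply/eqP; rewrite -[RHS](mulr0 N%:R) -[in RHS](w_orth _ (exps_diff_relation ab)).
rewrite mulr_sumr; apply: eq_bigr => j _; rewrite !natrM !W_w mxE.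
by case: ifP => [_|/negbT/w0->]; rewrite ?mulr0 ?subrr; ring.
Qed.

End Weights.

Lemma monomial_generation (M : choiceType) (e : M) (op : Monoid.com_law e) :
    fin_generated e op ->
  exists r (g : 'I_r -> M), forall m, exists a, m = monomial op g a.
Proof.
case=> s s_gen; pose g (j : 'I_(size s)) := nth e s j; exists (size s), g => m.
have [n [n_s ->]] := s_gen m; elim: n n_s => [|x n IH] n_s.
  exists (fun=> 0%N); rewrite big_nil /monomial big1 // => j _.
  by rewrite /mpow big_ord0.
rewrite big_cons; have [a ->] : exists a, \big[op/e]_(y <- n) y = monomial op g a.
  by apply: IH => y y_n; rewrite n_s // inE y_n orbT.
have lt_x : (index x s < size s)%N by rewrite index_mem n_s ?mem_head.
exists (fun j => (j == Ordinal lt_x) + a j)%N.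
by rewrite monomialD monomial_delta /g /= nth_index ?n_s ?mem_head.
Qed.

Lemma unit_grading (M : choiceType) (e : M) (op : Monoid.com_law e) :
    cancellative op -> fin_generated e op ->
  exists2 d : M -> nat, (forall a b, d (op a b) = d a + d b)%N &
    forall m, (d m == 0)%N = is_unitm op m.
Proof.
move=> op_cancel /monomial_generation[r [g g_gen]].
have [W [W_pos W_rel]] := nat_weights g op_cancel.
case: (choice g_gen) => exps expsE.
exists (fun m => \sum_j W j * exps m j)%N => [a b|m].
  rewrite -big_split /=; under [RHS]eq_bigr do rewrite -mulnDr.
  by apply: W_rel; rewrite monomialD -!expsE.
rewrite [in RHS](expsE m) unitm_monomial sum_nat_eq0; apply: eq_forallb => j /=.
by rewrite muln_eq0 -W_pos implybE -eqn0Ngt.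
Qed.

Theorem lemma1p5 (k : fieldType) (M : choiceType) (e : M) (op : Monoid.com_law e) :
  cancellative op -> fin_generated e op -> gp_torsion_free e op ->
  (* pi o i = id_Y, i.e. i^* o pi^* = id on k[M^x] *)
  (forall f : MA k (Mx op), i_star op (pi_star f) = f) /\
  (* i o pi naively A^1-homotopic to id_X, i.e. pi^* o i^* ~ id on k[M] *)
  naive_A1_htpy op e (fun f : MA k M => pi_star (i_star op f)) (fun f => f).
Proof.
move=> op_cancel op_fg _; split; first exact: i_star_pi_star.
have [d dM d_eq0] := unit_grading op_cancel op_fg.
exact/rst_step/(elem_A1_htpy_of_grading k dM d_eq0).
Qed.
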